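(* Let $\rho \in \mathcal{D}(\mathcal{H}_{B})$. If $\rho$ satisfies $\tr[\rho P_{DC}]=q$, then $\tr[\rho \Pi^N] \geq 1-\frac{q}{\lambda_{\mathrm{min}}^{N+1}}$, where $\Pi^N=\sum_{k=0}^N \tilde{\Pi}^k$. $N$ must be larger than 1 to obtain a nontrivial bound.
   Context: $\mathcal{H}_B$ is a two-polarization-mode Fock space. Bob's double-click POVM is $P_{DC} = p_{z} P_{H/V}+ (1-p_{z}) P_{D/A}$, where $P_{H/V} = \sum_{n_V=1}^\infty \sum_{n_H=1}^\infty |n_H,n_V\rangle\langle n_H,n_V|$ and $P_{D/A}$ is analogous in the diagonal basis, $p_z$ being the probability of choosing the $H/V$ basis. $\tilde{\Pi}^k = \sum_{n=0}^k |n,k-n\rangle\langle n,k-n|_{H/V}$ projects onto the total $k$-photon subspace, and $\lambda^{k}_{\min}$ denotes the smallest eigenvalue of $\tilde{\Pi}^k P_{DC}\tilde{\Pi}^k$, given by $\lambda^k_{\min}=\frac12-\frac12\sqrt{(2p_z-1)^2+8\cdot 2^{-k}(p_z-p_z^2)}$ for $k$ odd and $\frac12-\frac12\sqrt{(2p_z-1)^2+16\cdot 2^{-k}(p_z-p_z^2)}$ for $k$ even; this sequence is nondecreasing in $k$. *)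

From mathcomp Require Import all_boot all_order all_algebra.
From mathcomp Require Import complex.
From mathcomp Require Import all_classical all_reals all_analysis.
Import Order.TTheory GRing.Theory Num.Theory.
Import numFieldTopology.Exports numFieldNormedType.Exports.
Local Open Scope classical_set_scope.
Local Open Scope ring_scope.

Set Implicit Arguments.
Unset Strict Implicit.
Unset Printing Implicit Defensive.

(* Two-polarization-mode Fock space H_B with orthonormal Fock basis
   |n_H, n_V>, indexed by (n_H, n_V) : nat * nat.  An operator is given by
   its matrix elements  op x y = <x| A |y>  in this H/V Fock basis. *)
Definition fock := (nat * nat)%type.
Definition op (R : realType) := fock -> fock -> R[i].

Definition idop (R : realType) : op R := fun x y => if x == y then 1 else 0.

Definition kvec (k n : nat) : fock := (n, k - n)%N.

(* Block trace  tr[ Pi~^k rho Pi~^k X ]  =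
   sum_{i,j <= k} <i,k-i| rho |j,k-j> <j,k-j| X |i,k-i>.
   For an operator X commuting with total photon number (all the operators
   below), tr[rho X] = sum_k btr rho X k. *)
Definition btr (R : realType) (rho X : op R) (k : nat) : R[i] :=
  \sum_(i < k.+1) \sum_(j < k.+1) rho (kvec k i) (kvec k j) * X (kvec k j) (kvec k i).

(* Density operator on H_B: Hermitian, positive semidefinite (tested on all
   finitely supported vectors, i.e. vectors supported in a box [0,M)^2), and
   with trace (sum of the nonnegative diagonal entries) equal to 1.
   A positive semidefinite matrix with summable diagonal is exactly a positive
   trace-class operator. *)
Definition density (R : realType) (rho : op R) : Prop :=
  [/\ (forall x y, rho y x = (rho x y)^*%C),
      (forall (M : nat) (v : fock -> R[i]),
         0 <= \sum_(a < M) \sum_(b < M) \sum_(c < M) \sum_(d < M)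
                (v (nat_of_ord a, nat_of_ord b))^*%C
                * rho (nat_of_ord a, nat_of_ord b) (nat_of_ord c, nat_of_ord d)
                * v (nat_of_ord c, nat_of_ord d))
    & (fun n => \sum_(k < n) complex.Re (btr rho (@idop R) k)) @ \oo --> (1 : R)].

Definition PHV (R : realType) (x y : fock) : R :=
  if (x == y) && (0 < x.1)%N && (0 < x.2)%N then 1 else 0.

(* Diagonal basis: |D> = (|H>+|V>)/sqrt 2, |A> = (|H>-|V>)/sqrt 2, i.e.
   a_D^dag = (a_H^dag + a_V^dag)/sqrt 2, a_A^dag = (a_H^dag - a_V^dag)/sqrt 2.
   da_coef n m y = <y|_{H/V} |n,m>_{D/A}, where
   |n,m>_{D/A} = (a_D^dag)^n (a_A^dag)^m / sqrt(n! m!) |0>.  Expanding,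
   <p,q|n,m>_{D/A} = [p+q = n+m] sqrt(p! q! / (n! m! 2^(n+m)))
                      * sum_{i<=n, j<=m, i+j=p} C(n,i) C(m,j) (-1)^(m-j). *)
Definition da_coef (R : realType) (n m : nat) (y : fock) : R :=
  if (y.1 + y.2 == n + m)%N then
    Num.sqrt ((y.1)`! * (y.2)`!)%:R / Num.sqrt (n`! * m`! * 2 ^ (n + m))%:R
    * \sum_(i < n.+1) \sum_(j < m.+1)
        (if (i + j == y.1)%N then (-1) ^+ (m - j) * ('C(n, i) * 'C(m, j))%:R
         else 0)
  else 0.

(* P_{D/A} = sum_{n_D>=1, n_A>=1} |n_D,n_A><n_D,n_A|_{D/A}, written in the
   H/V basis (the D/A Fock states of total photon number k are those with
   n_D + n_A = k; only the block of total photon number x.1+x.2 contributes). *)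
Definition PDA (R : realType) (x y : fock) : R :=
  let k := (x.1 + x.2)%N in
  \sum_(n < k | (0 < n)%N) da_coef R n (k - n) x * da_coef R n (k - n) y.

Definition PDC (R : realType) (pz : R) : op R :=
  fun x y => (pz * PHV R x y + (1 - pz) * PDA R x y)%:C%C.

(* lambda^k_min: smallest eigenvalue of Pi~^k P_DC Pi~^k, as given in closed
   form in the paper. *)
Definition lambda_min (R : realType) (pz : R) (k : nat) : R :=
  1 / 2 - 1 / 2 * Num.sqrt ((2 * pz - 1) ^+ 2
     + (if odd k then 8 else 16) * (2 ^- k) * (pz - pz ^+ 2)).

Definition tr_PiN (R : realType) (rho : op R) (N : nat) : R :=
  complex.Re (\sum_(k < N.+1) btr rho (@idop R) k).

(* In the k-photon block with basis |n, k-n>, P_{H/V} is the identity minus the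
   projection onto the plane of the two corner states |0,k>, |k,0>, and P_{D/A} is
   the identity minus the projection onto the plane of the corresponding D/A states.
   Suitable bases of the two planes are pairwise orthogonal except for two matched
   pairs, whose squared overlaps are at most gamma^2 = (2 or 4) / 2^k; so the largest
   eigenvalue of pz (first projection) + (1 - pz) (second projection) is at most
   (1 + sqrt((2pz-1)^2 + 4pz(1-pz) gamma^2)) / 2, and tr[rho P_DC] restricted to the
   block is at least lambda^k_min tr[rho] restricted to the block.  Since lambda^k_min
   is nondecreasing, summing over the blocks k > N gives
   q >= lambda^(N+1)_min (1 - tr[rho Pi^N]).
   That the D/A Fock states of a block are orthonormal in the H/V basis comes down to
   the Krawtchouk identity sum_p K(n,p) K(p,j) = 2^k [n = j], where K(n,p) is the
   coefficient of X^p in (X+1)^n (X-1)^(k-n). *)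

From mathcomp Require Import all_boot all_order all_algebra.
From mathcomp Require Import complex.
From mathcomp Require Import all_classical all_reals all_analysis.
From mathcomp Require Import ring lra zify.
Import Order.TTheory GRing.Theory Num.Theory.
Import numFieldTopology.Exports numFieldNormedType.Exports.
Local Open Scope classical_set_scope.
Local Open Scope ring_scope.
Set Implicit Arguments.
Unset Strict Implicit.
Unset Printing Implicit Defensive.

Section DiagonalBasis.
Variable R : realType.

Definition kraw (k n p : nat) : R := \sum_(i < n.+1) \sum_(j < (k - n).+1)
   (if (i + j == p)%N then (-1) ^+ ((k - n) - j) * ('C(n, i) * 'C(k - n, j))%:R else 0).

Definition kraw_poly (k n : nat) : {poly R} := ('X + 1) ^+ n * ('X - 1) ^+ (k - n).

Lemma coef_kraw_poly k n p : (kraw_poly k n)`_p = kraw k n p.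
Proof.
rewrite /kraw_poly /kraw exprD1n (addrC 'X) exprDn mulr_suml coef_sum.
apply: eq_bigr => i _; rewrite mulr_sumr coef_sum; apply: eq_bigr => j _.
have -> : ('X ^+ i *+ 'C(n, i)) * ((-1) ^+ (k - n - j) * 'X ^+ j *+ 'C(k - n, j))
   = ((-1) ^+ (k - n - j) * ('C(n, i) * 'C(k - n, j))%:R)%:P * 'X ^+ (i + j) :> {poly R}.
  rewrite -[_ *+ 'C(n, i)]mulr_natr -[_ *+ 'C(k - n, j)]mulr_natr exprD natrM.
  by rewrite !rmorphM /= rmorphXn rmorphN1 /= !polyC_natr; ring.
by rewrite coefCM coefXn eq_sym; case: eqP => _; rewrite ?mulr1 ?mulr0.
Qed.

Lemma size_kraw_poly k n : (n <= k)%N -> (size (kraw_poly k n) <= k.+1)%N.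
Proof.
move=> nk; rewrite /kraw_poly.
have -> : ('X + 1 : {poly R}) = 'X - (-1)%:P by rewrite rmorphN1 opprK.
apply: leq_trans (size_polyMleq _ _) _.
rewrite !size_exp_XsubC /=; lia.
Qed.

Lemma horner_kraw_poly k n x : (kraw_poly k n).[x] = (x + 1) ^+ n * (x - 1) ^+ (k - n).
Proof. by rewrite /kraw_poly !hornerE. Qed.

(* At x != 1, substituting y = (x + 1) / (x - 1) turns the left-hand side into
   (x - 1)^k (y + 1)^n (y - 1)^(k - n) = 2^k x^n; the two sides agree at all
   integers x >= 2, hence everywhere. *)
Lemma kraw_poly_expansion k n : (n <= k)%N ->
  \sum_(p < k.+1) kraw k n p *: kraw_poly k p = 2 ^+ k *: 'X ^+ n.
Proof.
move=> nk; apply/eqP; rewrite -subr_eq0; apply/eqP.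
set Q := _ - _.
apply: (@roots_geq_poly_eq0 _ Q [seq i.+2%:R : R | i <- iota 0 (size Q)]); first last.
- by rewrite size_map size_iota.
- by rewrite map_inj_uniq ?iota_uniq // => a b /eqP; rewrite eqr_nat => /eqP [].
apply/allP => _ /mapP [i _ ->]; rewrite /root /Q !hornerE horner_sum.
set t : R := i.+2%:R.
have t1 : t - 1 != 0 by rewrite subr_eq0 /t pnatr_eq1.
set y := (t + 1) / (t - 1).
have kraw_poly_t (p : 'I_k.+1) : (kraw_poly k p).[t] = (t - 1) ^+ k * y ^+ p.
  rewrite horner_kraw_poly /y expr_div_n.
  rewrite -[X in (t - 1) ^+ X * _](subnKC (ltnSE (ltn_ord p))) exprD; field.
  by rewrite expf_neq0.
under eq_bigr do rewrite hornerZ kraw_poly_t mulrCA.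
rewrite -mulr_sumr.
under eq_bigr do rewrite -coef_kraw_poly.
rewrite -(horner_coef_wide y (size_kraw_poly nk)) horner_kraw_poly.
rewrite -{1}(subnKC nk) exprD mulrACA -!exprMn.
have -> : (t - 1) * (y + 1) = 2 * t by rewrite /y; field.
have -> : (t - 1) * (y - 1) = 2 by rewrite /y; field.
by rewrite exprMn -mulrA mulrCA -exprD subnKC // mulrC subrr.
Qed.

Lemma kraw_involutive k n j : (n <= k)%N ->
  \sum_(p < k.+1) kraw k n p * kraw k p j = 2 ^+ k * (j == n)%:R.
Proof.
move=> nk; have := congr1 (fun P : {poly R} => P`_j) (kraw_poly_expansion nk).
rewrite /= coef_sum coefZ coefXn => <-.
by apply: eq_bigr => p _; rewrite coefZ coef_kraw_poly.
Qed.

Definition kraw_term (k n p i : nat) : R :=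
  if (i <= p)%N then (-1) ^+ (k - n - (p - i)) * ('C(n, i) * 'C(k - n, p - i))%:R
  else 0.

Lemma kraw_single_sum k n p : (n <= k)%N -> kraw k n p = \sum_(i < k.+1) kraw_term k n p i.
Proof.
move=> nk; rewrite /kraw.
have inner (i : nat) : \sum_(j < (k - n).+1)
    (if (i + j == p)%N then (-1) ^+ ((k - n) - j) * ('C(n, i) * 'C(k - n, j))%:R else 0)
    = kraw_term k n p i.
  rewrite -big_mkcond /=.
  rewrite (eq_bigl (fun j : 'I_ _ => (i <= p)%N && (j == (p - i)%N :> nat))); last first.
    by move=> j /=; apply/eqP/andP => [<-|[ip /eqP ->]]; [split; lia | lia].
  rewrite (big_ord1_cond_eq _ (fun j : nat => (-1) ^+ ((k - n) - j)
             * ('C(n, i) * 'C(k - n, j))%:R) (fun _ => (i <= p)%N)) /kraw_term.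
  case: (leqP i p) => ip; rewrite ?andbF ?andbT //.
  case: (ltnP (p - i) (k - n).+1) => // hb.
  by rewrite (bin_small hb) muln0 mulr0.
rewrite (eq_bigr (fun i : 'I_n.+1 => kraw_term k n p i)) => [|i _]; last exact: inner.
rewrite -!(big_mkord xpredT (kraw_term k n p)).
rewrite [RHS](big_cat_nat (n := n.+1)) //= [X in _ = _ + X]big1_seq ?addr0 //.
move=> i /andP [_]; rewrite mem_index_iota => /andP [hi _].
by rewrite /kraw_term bin_small // mul0n mulr0; case: ifP.
Qed.

Definition fact_weight (k p : nat) : nat := (p`! * (k - p)`!)%N.

Lemma fact_weight_gt0 k p : (0 < fact_weight k p)%N.
Proof. by rewrite muln_gt0 !fact_gt0. Qed.

Lemma bin_fact_weight_sym k n p i :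
  (n <= k)%N -> (p <= k)%N -> (i <= n)%N -> (i <= p)%N ->
  ('C(n, i) * 'C(k - n, p - i) * fact_weight k p
   = 'C(p, i) * 'C(k - p, n - i) * fact_weight k n)%N.
Proof.
move=> nk pk iN iP; rewrite /fact_weight.
case: (leqP (p - i) (k - n)) => h; last first.
  have h' : (k - p < n - i)%N by lia.
  by rewrite (bin_small h) (bin_small h') !muln0 !mul0n.
have h' : (n - i <= k - p)%N by lia.
have e : (k - n - (p - i) = k - p - (n - i))%N by lia.
rewrite -{1}(bin_fact iP) -{1}(bin_fact h') -{1}(bin_fact iN) -{1}(bin_fact h) e.
ring.
Qed.

Lemma kraw_term_sym k n p i : (n <= k)%N -> (p <= k)%N ->
  (fact_weight k p)%:R * kraw_term k n p i = (fact_weight k n)%:R * kraw_term k p n i :> R.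
Proof.
move=> nk pk; rewrite /kraw_term.
case: (leqP i p) => iP; case: (leqP i n) => iN; rewrite ?mulr0 //.
- have -> : (k - n - (p - i) = k - p - (n - i))%N by lia.
  rewrite mulrCA [RHS]mulrCA -!natrM.
  by rewrite (mulnC (fact_weight k p)) (mulnC (fact_weight k n)) bin_fact_weight_sym.
- by rewrite (bin_small iN) mul0n mulr0n !mulr0.
- by rewrite (bin_small iP) mul0n mulr0n !mulr0.
Qed.

Lemma kraw_weighted_sym k n p : (n <= k)%N -> (p <= k)%N ->
  (fact_weight k p)%:R * kraw k n p = (fact_weight k n)%:R * kraw k p n :> R.
Proof.
move=> nk pk; rewrite !kraw_single_sum // !mulr_sumr.
by apply: eq_bigr => i _; rewrite kraw_term_sym.
Qed.

(* [da_mx k p n] is <p, k-p | n, k-n>_{D/A}: the k-photon block of the change of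
   basis from the H/V to the D/A Fock states. *)
Definition da_mx (k p n : nat) : R := da_coef R n (k - n) (p, (k - p)%N).

Let sqw k p : R := Num.sqrt (fact_weight k p)%:R.
Let sqrt2X k : R := Num.sqrt (2 ^ k)%:R.

Let sqw_gt0 k p : 0 < sqw k p.
Proof. by rewrite sqrtr_gt0 ltr0n fact_weight_gt0. Qed.

Let sqrt2X_gt0 k : 0 < sqrt2X k.
Proof. by rewrite sqrtr_gt0 ltr0n expn_gt0. Qed.

Let sqw_sqr k p : sqw k p ^+ 2 = (fact_weight k p)%:R.
Proof. by rewrite sqr_sqrtr // ler0n. Qed.

Let sqrt2X_sqr k : sqrt2X k ^+ 2 = 2 ^+ k.
Proof. by rewrite sqr_sqrtr ?ler0n // natrX. Qed.

Lemma da_mxE k p n : (n <= k)%N -> (p <= k)%N ->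
  da_mx k p n = sqw k p / (sqw k n * sqrt2X k) * kraw k n p.
Proof.
move=> nk pk; rewrite /da_mx /da_coef /= !subnKC // eqxx.
by rewrite -sqrtrM ?ler0n // -natrM.
Qed.

Lemma da_mx_sym k p n : (n <= k)%N -> (p <= k)%N -> da_mx k p n = da_mx k n p.
Proof.
move=> nk pk; rewrite !da_mxE //.
have := kraw_weighted_sym nk pk; rewrite -!sqw_sqr => hs.
have p0 := sqw_gt0 k p; have n0 := sqw_gt0 k n; have s0 := sqrt2X_gt0 k.
apply: (@mulfI _ (sqw k p * sqw k n * sqrt2X k)); first by rewrite !mulf_neq0 // gt_eqF.
rewrite [LHS](_ : _ = sqw k p ^+ 2 * kraw k n p); last by field; rewrite !gt_eqF.
by rewrite [RHS](_ : _ = sqw k n ^+ 2 * kraw k p n) //; field; rewrite !gt_eqF.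
Qed.

Lemma da_mx_orthonormal_rows k i j : (i <= k)%N -> (j <= k)%N ->
  \sum_(n < k.+1) da_mx k i n * da_mx k j n = (i == j)%:R.
Proof.
move=> ik jk; have j0 := sqw_gt0 k j; have s0 := sqrt2X_gt0 k.
rewrite (eq_bigr (fun n : 'I_k.+1 =>
    sqw k i / (sqw k j * sqrt2X k ^+ 2) * (kraw k j n * kraw k n i))); last first.
  move=> n _; have nk : (n <= k)%N := ltnSE (ltn_ord n).
  rewrite (da_mx_sym nk jk) !da_mxE //.
  by have n0 := sqw_gt0 k n; field; rewrite !gt_eqF.
rewrite -mulr_sumr kraw_involutive // sqrt2X_sqr.
case: eqP => [->|_]; last by rewrite !mulr0.
by field; rewrite !gt_eqF // expf_neq0.
Qed.

Lemma da_mx_orthonormal_cols k n n' : (n <= k)%N -> (n' <= k)%N ->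
  \sum_(p < k.+1) da_mx k p n * da_mx k p n' = (n == n')%:R.
Proof.
move=> nk nk'; rewrite -(da_mx_orthonormal_rows nk nk'); apply: eq_bigr => p _.
by have pk := ltnSE (ltn_ord p); rewrite (da_mx_sym nk pk) (da_mx_sym nk' pk).
Qed.

Lemma kraw_k_0 k : kraw k k 0 = 1.
Proof.
rewrite /kraw subnn big_ord_recl /= big_ord1 /= bin0 subnn expr0 mul1r bin0 mul1n.
by rewrite big1 ?addr0 // => i _; rewrite big1.
Qed.

Lemma kraw_k_k k : kraw k k k = 1.
Proof.
rewrite /kraw subnn big_ord_recr /= big_ord1 /= addn0 eqxx binn bin0 subnn expr0 mul1r.
by rewrite big1 ?add0r // => i _; rewrite big_ord1 /= addn0 ltn_eqF.
Qed.

Lemma kraw_0_0 k : kraw k 0 0 = (-1) ^+ k.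
Proof.
by rewrite /kraw subn0 big_ord1 /= big_ord_recl /= big1 ?addr0 // subn0 !bin0 mulr1.
Qed.

Lemma da_mx_0k k : da_mx k 0 k = (sqrt2X k)^-1.
Proof.
rewrite da_mxE // kraw_k_0 mulr1.
have -> : sqw k 0 = sqw k k by rewrite /sqw /fact_weight subn0 subnn mulnC.
by rewrite invfM mulrA divff ?gt_eqF // mul1r.
Qed.

Lemma da_mx_kk k : da_mx k k k = (sqrt2X k)^-1.
Proof. by rewrite da_mxE // kraw_k_k mulr1 invfM mulrA divff ?gt_eqF // mul1r. Qed.

Lemma da_mx_k0 k : da_mx k k 0 = (sqrt2X k)^-1.
Proof. by rewrite da_mx_sym // da_mx_0k. Qed.

Lemma da_mx_00 k : da_mx k 0 0 = (-1) ^+ k * (sqrt2X k)^-1.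
Proof. by rewrite da_mxE // kraw_0_0 invfM mulrA divff ?gt_eqF // mul1r mulrC. Qed.

Lemma sqr_inv_sqrt_exp2 k : (sqrt2X k)^-1 ^+ 2 = (2 ^+ k)^-1.
Proof. by rewrite exprVn sqrt2X_sqr. Qed.

End DiagonalBasis.

Section EuclideanBounds.
Variable R : realType.

Lemma two_line_pivot_lt (p g S : R) :
  0 < p < 1 -> 0 <= g < 1 -> (2 * p - 1) ^+ 2 < S ^+ 2 ->
  (2 * p - 1) ^+ 2 + 4 * p * (1 - p) * g <= S ^+ 2 ->
  0 <= S -> 2 * p - 1 + 2 * (1 - p) * g < S.
Proof.
move=> /andP [p0 p1] /andP [g0 g1] hP hD S0.
set X := 2 * p - 1 + 2 * (1 - p) * g.
suff : X ^+ 2 < S ^+ 2 by nra.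
have -> : X ^+ 2 = (2 * p - 1) ^+ 2 + 4 * p * (1 - p) * g
                   - 4 * (1 - p) ^+ 2 * (g * (1 - g)) by rewrite /X; ring.
have [g_eq0|g_neq0] := eqVneq g 0; first by rewrite g_eq0 !(mulr0, mul0r) subr0 addr0.
have : 0 < (1 - p) ^+ 2 * (g * (1 - g)).
  by rewrite mulr_gt0 ?exprn_gt0 ?mulr_gt0 ?subr_gt0 // lt_def g_neq0.
lra.
Qed.

(* (1 + S) / 2 bounds the largest eigenvalue (1 + sqrt((2p-1)^2 + 4p(1-p)gam^2)) / 2
   of p |u><u| + (1 - p) |g><g| for unit vectors with <u, g> = gam; in the
   plane of u and g a vector has coordinates a = <u, w> and t = <g - gam u, w>. *)
Lemma two_line_form_le (p gam S a t : R) :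
  0 < p < 1 -> gam ^+ 2 < 1 -> 0 <= S -> (2 * p - 1) ^+ 2 < S ^+ 2 ->
  (2 * p - 1) ^+ 2 + 4 * p * (1 - p) * gam ^+ 2 <= S ^+ 2 ->
  p * a ^+ 2 + (1 - p) * (gam * a + t) ^+ 2
    <= (1 + S) / 2 * (a ^+ 2 + t ^+ 2 / (1 - gam ^+ 2)).
Proof.
move=> hp g1 S0 hP hD; have /andP [p0 p1] := hp.
have g01 : 0 <= gam ^+ 2 < 1 by rewrite sqr_ge0 g1.
have hXS := two_line_pivot_lt hp g01 hP hD S0.
set g := gam ^+ 2 in g1 hD hXS *.
set m := (1 + S) / 2.
have hm : 0 <= m ^+ 2 - m + p * (1 - p) * (1 - g).
  have -> : m ^+ 2 - m + p * (1 - p) * (1 - g)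
     = (S ^+ 2 - ((2 * p - 1) ^+ 2 + 4 * p * (1 - p) * g)) / 4 by rewrite /m; field.
  by apply: divr_ge0; lra.
set A := (1 - g) * (m - p - (1 - p) * g).
set B := - 2 * (1 - p) * (1 - g) * gam.
set C := m - (1 - p) * (1 - g).
have A0 : 0 < A by apply: mulr_gt0; rewrite /m; lra.
have Q0 : 0 <= A * a ^+ 2 + B * a * t + C * t ^+ 2.
  have h4 : 4 * A * (A * a ^+ 2 + B * a * t + C * t ^+ 2)
      = (2 * A * a + B * t) ^+ 2 + 4 * (1 - g) * (m ^+ 2 - m + p * (1 - p) * (1 - g)) * t ^+ 2.
    by rewrite /A /B /C /g; ring.
  have : 0 <= 4 * A * (A * a ^+ 2 + B * a * t + C * t ^+ 2).
    rewrite h4 addr_ge0 ?sqr_ge0 // mulr_ge0 ?sqr_ge0 // mulr_ge0 //.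
    by rewrite mulr_ge0 //; lra.
  by rewrite pmulr_rge0 //; lra.
have -> : (1 + S) / 2 * (a ^+ 2 + t ^+ 2 / (1 - g))
    = p * a ^+ 2 + (1 - p) * (gam * a + t) ^+ 2
      + (A * a ^+ 2 + B * a * t + C * t ^+ 2) / (1 - g).
  by rewrite -/m /A /B /C /g; field; rewrite subr_eq0 gt_eqF.
by rewrite lerDl divr_ge0 //; lra.
Qed.

Variable K : nat.

Definition dot (f g : 'I_K -> R) : R := \sum_(i < K) f i * g i.

Lemma dotC f g : dot f g = dot g f.
Proof. by apply: eq_bigr => i _; rewrite mulrC. Qed.

Lemma dot_combl (x y : R) f g h :
  dot (fun i => x * f i + y * g i) h = x * dot f h + y * dot g h.
Proof. by rewrite /dot !mulr_sumr -big_split; apply: eq_bigr => i _ /=; ring. Qed.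

Lemma dot_combr (x y : R) f g h :
  dot h (fun i => x * f i + y * g i) = x * dot h f + y * dot h g.
Proof. by rewrite dotC dot_combl !(dotC h). Qed.

Lemma bessel r (F : 'I_r -> 'I_K -> R) (w : 'I_K -> R) :
  (forall j j', j != j' -> dot (F j) (F j') = 0) ->
  (forall j, 0 < dot (F j) (F j)) ->
  \sum_(j < r) (dot (F j) w) ^+ 2 / dot (F j) (F j) <= dot w w.
Proof.
move=> orth pos.
pose a j := dot (F j) w / dot (F j) (F j).
pose v i := \sum_(j < r) a j * F j i.
set T := \sum_(j < r) _.
have wv : \sum_(i < K) w i * v i = T.
  rewrite /v; under eq_bigr do rewrite mulr_sumr.
  rewrite exchange_big /=; apply: eq_bigr => j _.
  rewrite /a (_ : \sum_(i < K) _ = dot (F j) w / dot (F j) (F j) * dot (F j) w).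
    by rewrite mulrAC expr2.
  by rewrite /dot mulr_sumr; apply: eq_bigr => i _; ring.
have vv : \sum_(i < K) v i ^+ 2 = T.
  rewrite /v; under eq_bigr do rewrite expr2 mulr_suml.
  rewrite exchange_big /=; apply: eq_bigr => j _.
  under eq_bigr do rewrite mulr_sumr.
  rewrite exchange_big /= (bigD1 j) //= [X in _ + X]big1 ?addr0 => [|j' hj'].
    rewrite (_ : \sum_(i < K) _ = a j ^+ 2 * dot (F j) (F j)).
      by have := pos j => hp; rewrite /a; field; exact: lt0r_neq0.
    by rewrite /dot mulr_sumr; apply: eq_bigr => i _; rewrite expr2; ring.
  rewrite (_ : \sum_(i < K) _ = a j * a j' * dot (F j) (F j')).
    by rewrite orth ?mulr0 // eq_sym.
  by rewrite /dot mulr_sumr; apply: eq_bigr => i _; ring.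
have : 0 <= \sum_(i < K) (w i - v i) ^+ 2 by apply: sumr_ge0 => i _; exact: sqr_ge0.
have -> : \sum_(i < K) (w i - v i) ^+ 2
    = dot w w - 2 * (\sum_(i < K) w i * v i) + \sum_(i < K) v i ^+ 2.
  by rewrite /dot mulr_sumr -sumrB -big_split /=; apply: eq_bigr => i _; ring.
rewrite wv vv; lra.
Qed.

Lemma two_planes_form_le (w u1 u2 g1 g2 : 'I_K -> R) (gam1 gam2 G p S : R) :
  dot u1 u1 = 1 -> dot u2 u2 = 1 -> dot g1 g1 = 1 -> dot g2 g2 = 1 ->
  dot u1 u2 = 0 -> dot g1 g2 = 0 -> dot u1 g2 = 0 -> dot u2 g1 = 0 ->
  dot u1 g1 = gam1 -> dot u2 g2 = gam2 ->
  gam1 ^+ 2 <= G -> gam2 ^+ 2 <= G -> G < 1 ->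
  0 < p < 1 -> 0 <= S -> (2 * p - 1) ^+ 2 < S ^+ 2 ->
  (2 * p - 1) ^+ 2 + 4 * p * (1 - p) * G <= S ^+ 2 ->
  p * (dot u1 w ^+ 2 + dot u2 w ^+ 2) + (1 - p) * (dot g1 w ^+ 2 + dot g2 w ^+ 2)
    <= (1 + S) / 2 * dot w w.
Proof.
move=> u11 u22 g11 g22 u12 g12 u1g2 u2g1 u1g1 u2g2 gam1G gam2G G1 hp S0 hP hD.
have /andP [p0 p1] := hp.
have line_le gam : gam ^+ 2 <= G -> forall a t, p * a ^+ 2 + (1 - p) * (gam * a + t) ^+ 2
    <= (1 + S) / 2 * (a ^+ 2 + t ^+ 2 / (1 - gam ^+ 2)).
  move=> gamG a t; apply: two_line_form_le => //; first exact: le_lt_trans G1.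
  apply: le_trans hD; rewrite lerD2l ler_wpM2l //.
  by rewrite mulr_ge0 // ?subr_ge0; apply/ltW; rewrite ?mulr_gt0.
pose r1 i := 1 * g1 i + (- gam1) * u1 i.
pose r2 i := 1 * g2 i + (- gam2) * u2 i.
have dots := (dot_combl, dot_combr, u11, u22, g11, g22, u12, g12, u1g2, u2g1, u1g1, u2g2,
  etrans (dotC _ _) u12, etrans (dotC _ _) u1g2, etrans (dotC _ _) u2g1,
  etrans (dotC _ _) u1g1, etrans (dotC _ _) u2g2).
have r11 : dot r1 r1 = 1 - gam1 ^+ 2 by rewrite /r1 !dots; ring.
have r22 : dot r2 r2 = 1 - gam2 ^+ 2 by rewrite /r2 !dots; ring.
have r12 : dot r1 r2 = 0 by rewrite /r1 /r2 !dots; ring.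
have r1u1 : dot r1 u1 = 0 by rewrite /r1 !dots; ring.
have r1u2 : dot r1 u2 = 0 by rewrite /r1 !dots; ring.
have r2u1 : dot r2 u1 = 0 by rewrite /r2 !dots; ring.
have r2u2 : dot r2 u2 = 0 by rewrite /r2 !dots; ring.
pose F (j : 'I_4) := nth u1 [:: u1; u2; r1; r2] j.
have orth j j' : j != j' -> dot (F j) (F j') = 0.
  case: j j' => [[|[|[|[|?]]]] ?] [[|[|[|[|?]]]] ?] //= _;
    by rewrite ?u12 ?r1u1 ?r1u2 ?r2u1 ?r2u2 ?r12 // dotC ?u12 ?r1u1 ?r1u2 ?r2u1 ?r2u2 ?r12.
have pos j : 0 < dot (F j) (F j).
  by case: j => [[|[|[|[|?]]]] ?] //=; rewrite ?u11 ?u22 ?r11 ?r22 ?ltr01 // subr_gt0;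
     apply: le_lt_trans G1.
have := bessel w orth pos.
rewrite !big_ord_recl big_ord0 addr0 /F /= u11 u22 r11 r22 !divr1.
have -> : dot g1 w = gam1 * dot u1 w + dot r1 w by rewrite dot_combl; ring.
have -> : dot g2 w = gam2 * dot u2 w + dot r2 w by rewrite dot_combl; ring.
have := line_le _ gam1G (dot u1 w) (dot r1 w).
have := line_le _ gam2G (dot u2 w) (dot r2 w).
have : 0 <= (1 + S) / 2 by apply: divr_ge0; lra.
move=> m0 h2 h1 /(ler_wpM2l m0); lra.
Qed.

End EuclideanBounds.

Lemma big_ord_ends (V : nmodType) m (F : 'I_m.+1 -> V) : (0 < m)%N ->
  \sum_(a < m.+1) F a
  = F ord0 + F ord_max + \sum_(a < m.+1 | (0 < a)%N && (0 < m - a)%N) F a.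
Proof.
move=> m0; have max_neq0 : (ord_max : 'I_m.+1) != ord0 by rewrite -val_eqE /= gtn_eqF.
rewrite (bigD1 ord0) //= (bigD1 ord_max) //= addrA; congr (_ + _).
apply: eq_bigl => a; rewrite -!val_eqE /= lt0n subn_gt0.
by have := ltn_ord a; rewrite ltnS leq_eqVlt; case: ltngtP.
Qed.

Lemma big_nat_ends (V : nmodType) m (F : nat -> V) : (0 < m)%N ->
  \sum_(n < m.+1) F n = F 0%N + F m + \sum_(n < m | (0 < n)%N) F n.
Proof.
case: m => // m _; rewrite big_ord_recr big_ord_recl /= [in RHS]big_mkcond big_ord_recl /=.
by rewrite add0r addrAC.
Qed.

Definition max_overlap_sqr (R : realType) (k : nat) : R := (if odd k then 2 else 4) / 2 ^+ k.

Lemma max_overlap_sqr_lt1 (R : realType) k : (2 < k)%N -> max_overlap_sqr R k < 1.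
Proof.
move=> k_gt2; have : (2 ^ 3 <= 2 ^ k)%N by rewrite leq_pexp2l.
rewrite -(ler_nat R) !natrX /max_overlap_sqr => le8.
by rewrite ltr_pdivrMr ?exprn_gt0 // mul1r; case: odd; lra.
Qed.

Lemma max_overlap_sqr_gt0 (R : realType) k : 0 < max_overlap_sqr R k.
Proof. by rewrite divr_gt0 ?exprn_gt0 //; case: odd. Qed.

Lemma max_overlap_sqr_nonincreasing (R : realType) m n : (m <= n)%N ->
  max_overlap_sqr R n <= max_overlap_sqr R m.
Proof.
elim: n => [|n IHn]; first by rewrite leqn0 => /eqP ->.
rewrite leq_eqVlt => /predU1P [-> //|]; rewrite ltnS => /IHn; apply: le_trans.
rewrite /max_overlap_sqr /= exprS invfM mulrA.
have : 0 < (2 ^+ n)^-1 :> R by rewrite invr_gt0 exprn_gt0.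
by set t := (2 ^+ n)^-1; case: odd => /=; lra.
Qed.

Section KPhotonBlock.
Variables (R : realType) (k : nat).
Local Notation K := k.+1.
Local Notation dot := (@dot R K).

Definition pdc_block (pz : R) (a b : 'I_K) : R :=
  pz * PHV R (kvec k a) (kvec k b) + (1 - pz) * PDA R (kvec k a) (kvec k b).

Definition qform (Y : 'I_K -> 'I_K -> R) (w : 'I_K -> R) : R :=
  \sum_(a < K) \sum_(b < K) w a * Y a b * w b.

Lemma kvec_eq (a b : 'I_K) : (kvec k a == kvec k b) = (a == b).
Proof.
rewrite /kvec xpair_eqE; case: (eqVneq a b) => [->|ab]; first by rewrite !eqxx.
by rewrite val_eqE (negbTE ab).
Qed.

Lemma PHV_kvec (a b : 'I_K) : PHV R (kvec k a) (kvec k b) =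
  if (a == b) && (0 < a)%N && (0 < k - a)%N then 1 else 0.
Proof. by rewrite /PHV kvec_eq. Qed.

Lemma PDA_kvec (a b : 'I_K) : PDA R (kvec k a) (kvec k b) =
  \sum_(n < k | (0 < n)%N) da_mx R k a n * da_mx R k b n.
Proof. by rewrite /PDA /kvec /= subnKC // ltnSE. Qed.

Lemma pdc_block_sym pz (a b : 'I_K) : pdc_block pz a b = pdc_block pz b a.
Proof.
rewrite /pdc_block !PHV_kvec !PDA_kvec eq_sym.
case: (eqVneq b a) => [->|] //= _; congr (_ + _ * _).
by apply: eq_bigr => n _; rewrite mulrC.
Qed.

Lemma qform_comb (x y : R) (P Q : 'I_K -> 'I_K -> R) w :
  qform (fun a b => x * P a b + y * Q a b) w = x * qform P w + y * qform Q w.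
Proof.
rewrite /qform !mulr_sumr -big_split; apply: eq_bigr => a _ /=.
by rewrite !mulr_sumr -big_split; apply: eq_bigr => b _ /=; ring.
Qed.

Lemma qform_PHV w : qform (fun a b => PHV R (kvec k a) (kvec k b)) w =
  \sum_(a < K | (0 < a)%N && (0 < k - a)%N) w a ^+ 2.
Proof.
rewrite big_mkcond; apply: eq_bigr => a _; rewrite (bigD1 a) //= big1 => [|b ba].
  by rewrite PHV_kvec eqxx addr0; case: ifP; rewrite ?mulr1 ?mulr0 ?mul0r ?expr2.
by rewrite PHV_kvec eq_sym (negbTE ba) mulr0 mul0r.
Qed.

Lemma qform_PDA w : qform (fun a b => PDA R (kvec k a) (kvec k b)) w =
  \sum_(n < k | (0 < n)%N) dot (fun a => da_mx R k a n) w ^+ 2.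
Proof.
rewrite /qform; under eq_bigr do under eq_bigr do rewrite PDA_kvec mulr_sumr mulr_suml.
under eq_bigr do rewrite exchange_big /=.
rewrite exchange_big /=; apply: eq_bigr => n _.
rewrite expr2 /dot mulr_suml; apply: eq_bigr => a _.
by rewrite mulr_sumr; apply: eq_bigr => b _; ring.
Qed.

Lemma pdc_block_formE pz w : qform (pdc_block pz) w =
  pz * \sum_(a < K | (0 < a)%N && (0 < k - a)%N) w a ^+ 2
  + (1 - pz) * \sum_(n < k | (0 < n)%N) dot (fun a => da_mx R k a n) w ^+ 2.
Proof. by rewrite qform_comb qform_PHV qform_PDA. Qed.

Lemma pdc_block_form_ge0 pz w : 0 <= pz <= 1 -> 0 <= qform (pdc_block pz) w.
Proof.
case/andP=> pz0 pz1; rewrite pdc_block_formE.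
by rewrite addr_ge0 // mulr_ge0 ?subr_ge0 // sumr_ge0 // => i _; exact: sqr_ge0.
Qed.

(* Coordinates of the corner states |0,k>, |k,0> and of their D/A counterparts
   |0,k>_{D/A}, |k,0>_{D/A} in the basis |a, k-a> of the block. *)
Definition hv0 : 'I_K -> R := fun a => (a == 0%N :> nat)%:R.
Definition hvk : 'I_K -> R := fun a => (a == k :> nat)%:R.
Definition da0 : 'I_K -> R := fun a => da_mx R k a 0.
Definition dak : 'I_K -> R := fun a => da_mx R k a k.

Lemma dot_hv0 f : dot hv0 f = f ord0.
Proof.
rewrite /dot (bigD1 ord0) //= big1 ?addr0 ?mul1r // => i i0.
by rewrite /hv0 -[0%N]/(val (@ord0 k)) val_eqE (negbTE i0) mul0r.
Qed.

Lemma dot_hvk f : dot hvk f = f ord_max.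
Proof.
rewrite /dot (bigD1 ord_max) //= /hvk eqxx big1 ?addr0 ?mul1r // => i ik.
by rewrite -[k in _ == k]/(val (@ord_max k)) val_eqE (negbTE ik) mul0r.
Qed.

Lemma dot_da_col w : \sum_(n < K) dot (fun a => da_mx R k a n) w ^+ 2 = dot w w.
Proof.
have sqrE (n : 'I_K) : dot (fun a => da_mx R k a n) w ^+ 2
    = \sum_(a < K) \sum_(b < K) w a * w b * (da_mx R k a n * da_mx R k b n).
  rewrite expr2 /dot mulr_suml; apply: eq_bigr => a _.
  by rewrite mulr_sumr; apply: eq_bigr => b _; ring.
under eq_bigr do rewrite sqrE.
rewrite exchange_big /=; apply: eq_bigr => a _; rewrite exchange_big /=.
under eq_bigr => b _ do
  rewrite -mulr_sumr (da_mx_orthonormal_rows R (ltnSE (ltn_ord a)) (ltnSE (ltn_ord b))).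
rewrite (bigD1 a) //= eqxx mulr1 big1 ?addr0 // => b ba.
by rewrite val_eqE eq_sym (negbTE ba) mulr0.
Qed.

Lemma pdc_block_form_corners pz w : (0 < k)%N -> qform (pdc_block pz) w
  = dot w w - (pz * (dot hv0 w ^+ 2 + dot hvk w ^+ 2)
               + (1 - pz) * (dot da0 w ^+ 2 + dot dak w ^+ 2)).
Proof.
move=> k_gt0; rewrite pdc_block_formE dot_hv0 dot_hvk.
have sum_w : dot w w = \sum_(a < K) w a ^+ 2 by apply: eq_bigr => a _; rewrite expr2.
have := big_ord_ends (fun a => w a ^+ 2) k_gt0.
have := big_nat_ends (fun n => dot (fun a => da_mx R k a n) w ^+ 2) k_gt0.
rewrite dot_da_col -sum_w -/da0 -/dak => hda hw.
have -> : dot w w = pz * dot w w + (1 - pz) * dot w w by ring.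
by rewrite {1}hw hda; ring.
Qed.

Hypothesis k_gt2 : (2 < k)%N.
Let k_gt0 : (0 < k)%N. Proof. exact: ltn_trans k_gt2. Qed.

Let c : R := (Num.sqrt (2 ^ k)%:R)^-1.
Let h : R := Num.sqrt 2^-1.

Let c_sqr : c ^+ 2 = (2 ^+ k)^-1. Proof. exact: sqr_inv_sqrt_exp2. Qed.
Let h_sqr : h ^+ 2 = 2^-1. Proof. by rewrite sqr_sqrtr // invr_ge0. Qed.

Let sum_sqr_rot x y : (h * x + h * y) ^+ 2 + (h * x + - h * y) ^+ 2 = x ^+ 2 + y ^+ 2.
Proof.
rewrite (_ : _ + _ = 2 * h ^+ 2 * (x ^+ 2 + y ^+ 2)); last by ring.
by rewrite h_sqr mulfV ?mul1r // pnatr_eq0.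
Qed.

Let hv0_hv0 : dot hv0 hv0 = 1. Proof. by rewrite dot_hv0 /hv0 eqxx. Qed.
Let hvk_hvk : dot hvk hvk = 1. Proof. by rewrite dot_hvk /hvk /= eqxx. Qed.
Let hv0_hvk : dot hv0 hvk = 0. Proof. by rewrite dot_hv0 /hvk eq_sym gtn_eqF. Qed.
Let hvk_hv0 : dot hvk hv0 = 0. Proof. by rewrite dotC hv0_hvk. Qed.
Let hv0_dak : dot hv0 dak = c. Proof. by rewrite dot_hv0 /dak /= da_mx_0k. Qed.
Let hvk_dak : dot hvk dak = c. Proof. by rewrite dot_hvk /dak /= da_mx_kk. Qed.
Let hv0_da0 : dot hv0 da0 = (-1) ^+ k * c. Proof. by rewrite dot_hv0 /da0 /= da_mx_00. Qed.
Let hvk_da0 : dot hvk da0 = c. Proof. by rewrite dot_hvk /da0 /= da_mx_k0. Qed.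
Let dak_dak : dot dak dak = 1. Proof. by rewrite /dot da_mx_orthonormal_cols // eqxx. Qed.
Let da0_da0 : dot da0 da0 = 1. Proof. by rewrite /dot da_mx_orthonormal_cols // eqxx. Qed.
Let dak_da0 : dot dak da0 = 0. Proof. by rewrite /dot da_mx_orthonormal_cols // gtn_eqF. Qed.
Let da0_dak : dot da0 dak = 0. Proof. by rewrite dotC dak_da0. Qed.

Let corner_dots := (dot_combl, dot_combr, hv0_hv0, hvk_hvk, hv0_hvk, hvk_hv0, hv0_dak,
  hvk_dak, hv0_da0, hvk_da0, dak_dak, da0_da0, dak_da0, da0_dak).

Let hv_plus i := h * hv0 i + h * hvk i.
Let hv_minus i := h * hv0 i + - h * hvk i.

Let hv_plus_unit : dot hv_plus hv_plus = 1.
Proof. by rewrite /hv_plus !corner_dots; have := h_sqr; lra. Qed.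

Let hv_minus_unit : dot hv_minus hv_minus = 1.
Proof. by rewrite /hv_minus !corner_dots; have := h_sqr; lra. Qed.

Let hv_plus_minus : dot hv_plus hv_minus = 0.
Proof. by rewrite /hv_plus /hv_minus !corner_dots; ring. Qed.

Let hv_corner_form w :
  dot hv_plus w ^+ 2 + dot hv_minus w ^+ 2 = dot hv0 w ^+ 2 + dot hvk w ^+ 2.
Proof. by rewrite !dot_combl sum_sqr_rot. Qed.

Lemma corner_form_le pz S w : 0 < pz < 1 -> 0 <= S -> (2 * pz - 1) ^+ 2 < S ^+ 2 ->
  (2 * pz - 1) ^+ 2 + 4 * pz * (1 - pz) * max_overlap_sqr R k <= S ^+ 2 ->
  pz * (dot hv0 w ^+ 2 + dot hvk w ^+ 2) + (1 - pz) * (dot da0 w ^+ 2 + dot dak w ^+ 2)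
    <= (1 + S) / 2 * dot w w.
Proof.
move=> hp S0 hP hD; rewrite -hv_corner_form [dot da0 w ^+ 2 + _]addrC.
have G1 := max_overlap_sqr_lt1 R k_gt2.
case: (boolP (odd k)) => [k_odd | k_even].
- have sgn : (-1) ^+ k = -1 :> R by rewrite -signr_odd k_odd.
  have G : max_overlap_sqr R k = 2 * c ^+ 2 by rewrite /max_overlap_sqr k_odd c_sqr.
  have gamE : (2 * h * c) ^+ 2 = max_overlap_sqr R k by rewrite G !exprMn h_sqr; field.
  apply: (@two_planes_form_le R K w hv_plus hv_minus dak da0 (2 * h * c) (- (2 * h * c))
            (max_overlap_sqr R k)) => //; rewrite ?corner_dots ?sgn ?sqrrN ?gamE //; ring.
- have sgn : (-1) ^+ k = 1 :> R by rewrite -signr_odd (negbTE k_even).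
  have G : max_overlap_sqr R k = 4 * c ^+ 2 by rewrite /max_overlap_sqr (negbTE k_even) c_sqr.
  pose da_plus i := h * dak i + h * da0 i.
  pose da_minus i := h * dak i + - h * da0 i.
  have -> : dot dak w ^+ 2 + dot da0 w ^+ 2 = dot da_plus w ^+ 2 + dot da_minus w ^+ 2.
    by rewrite !dot_combl sum_sqr_rot.
  have hh : h * h = 2^-1 by rewrite -expr2 h_sqr.
  apply: (@two_planes_form_le R K w hv_plus hv_minus da_plus da_minus (2 * c) 0
            (max_overlap_sqr R k)) => //; rewrite ?corner_dots ?sgn; try (lra || ring).
  + by rewrite !mulrDr !mulrA !mulr1 hh; field.
  + by rewrite expr0n /= ltW // max_overlap_sqr_gt0.
Qed.

Lemma pdc_block_form_ge pz S w : 0 < pz < 1 -> 0 <= S -> (2 * pz - 1) ^+ 2 < S ^+ 2 ->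
  (2 * pz - 1) ^+ 2 + 4 * pz * (1 - pz) * max_overlap_sqr R k <= S ^+ 2 ->
  (1 - (1 + S) / 2) * dot w w <= qform (pdc_block pz) w.
Proof.
move=> hp S0 hP hD; rewrite pdc_block_form_corners //.
have := corner_form_le w hp S0 hP hD; lra.
Qed.

End KPhotonBlock.

Section PsdTrace.
Variable R : realType.
Local Notation C := R[i].

Lemma conjcE (x : C) : x^*%C = Num.conj x.
Proof. by case: x. Qed.

Lemma ReD (x y : C) : complex.Re (x + y) = complex.Re x + complex.Re y.
Proof. by case: x; case: y. Qed.

Lemma Re_sum I (r : seq I) (P : pred I) (F : I -> C) :
  complex.Re (\sum_(i <- r | P i) F i) = \sum_(i <- r | P i) complex.Re (F i).
Proof. exact: (big_morph _ ReD). Qed.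

Lemma Re_subMl_real (x y : C) (c : R) :
  complex.Re (x - c%:C%C * y) = complex.Re x - c * complex.Re y.
Proof. by case: x => a b; case: y => u v /=; ring. Qed.

Lemma Re_conjM_real (z w : C) (c : R) : complex.Re (Num.conj z * w * c%:C%C)
  = c * (complex.Re z * complex.Re w + complex.Im z * complex.Im w).
Proof. by case: z => a b; case: w => x y; rewrite -conjcE /=; ring. Qed.

Lemma Re_ge0M (d z : C) : 0 <= d -> complex.Re (d * z) = complex.Re d * complex.Re z.
Proof.
rewrite lecE => /andP [/eqP hI _]; case: d hI => a b /= ->; case: z => x y /=; ring.
Qed.

Lemma Re_ge0 (d : C) : 0 <= d -> 0 <= complex.Re d.
Proof. by rewrite lecE => /andP [_ ->]. Qed.

Variable K : nat.

Lemma psd_spectral_decomposition (A : 'I_K -> 'I_K -> C) :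
  (forall i j, A j i = (A i j)^*%C) ->
  (forall v : 'I_K -> C, 0 <= \sum_(a < K) \sum_(b < K) (v a)^*%C * A a b * v b) ->
  exists (D : 'I_K -> C) (P : 'I_K -> 'I_K -> C), (forall r, 0 <= D r) /\
    forall i j, A i j = \sum_(r < K) Num.conj (P r i) * D r * P r j.
Proof.
move=> herm psd.
pose Am : 'M[C]_K := \matrix_(i, j) A i j.
pose adj (M : 'M[C]_K) := map_mx Num.conj M^T.
have Am_normal : Am \is normalmx.
  apply/normalmxP; suff -> : map_mx Num.conj Am^T = Am by [].
  by apply/matrixP => i j; rewrite !mxE herm conjcE conjCK.
have AE := orthomx_spectralP Am_normal.
set P := spectralmx Am in AE; set D := spectral_diag Am in AE.
have P_adj : P *m adj P = 1%:M by apply/unitarymxP; exact: spectral_unitarymx.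
rewrite invmx_unitary ?spectral_unitarymx // in AE.
exists (D 0), (fun r i => P r i); split => [r|i j]; last first.
  have := congr1 (fun M : 'M[C]_K => M i j) AE; rewrite /= mxE => ->; rewrite mxE.
  by apply: eq_bigr => r _; rewrite mul_mx_diag !mxE.
have : P *m Am *m adj P = diag_mx D by rewrite AE !mulmxA P_adj mul1mx -mulmxA P_adj mulmx1.
move/(congr1 (fun M : 'M[C]_K => M r r)); rewrite [RHS]mxE eqxx mulr1n => <-.
rewrite mxE; under eq_bigr => b _ do rewrite mxE mulr_suml.
rewrite exchange_big /=.
have := psd (fun a => Num.conj (P r a)); congr (_ <= _); apply: eq_bigr => a _.
by apply: eq_bigr => b _; rewrite !mxE conjcE conjCK.
Qed.

Lemma Re_trace_psd_ge0 (A : 'I_K -> 'I_K -> C) (Y : 'I_K -> 'I_K -> R) :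
  (forall i j, A j i = (A i j)^*%C) ->
  (forall v : 'I_K -> C, 0 <= \sum_(a < K) \sum_(b < K) (v a)^*%C * A a b * v b) ->
  (forall i j, Y i j = Y j i) ->
  (forall x : 'I_K -> R, 0 <= \sum_(a < K) \sum_(b < K) x a * Y a b * x b) ->
  0 <= complex.Re (\sum_(i < K) \sum_(j < K) A i j * (Y j i)%:C%C).
Proof.
move=> herm psd Ysym Ypsd.
have [D [P [D_ge0 AE]]] := psd_spectral_decomposition herm psd.
have -> : \sum_(i < K) \sum_(j < K) A i j * (Y j i)%:C%C = \sum_(r < K) D r *
    (\sum_(i < K) \sum_(j < K) Num.conj (P r i) * P r j * (Y j i)%:C%C).
  under eq_bigr do under eq_bigr do rewrite AE mulr_suml.
  under eq_bigr do rewrite exchange_big /=.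
  rewrite exchange_big /=; apply: eq_bigr => r _; rewrite mulr_sumr.
  by apply: eq_bigr => i _; rewrite mulr_sumr; apply: eq_bigr => j _; ring.
rewrite Re_sum; apply: sumr_ge0 => r _.
rewrite Re_ge0M //; apply: mulr_ge0; first exact: Re_ge0.
rewrite Re_sum; under eq_bigr do rewrite Re_sum.
under eq_bigr do under eq_bigr do rewrite Re_conjM_real.
pose x i := complex.Re (P r i); pose y i := complex.Im (P r i).
have -> : \sum_(i < K) \sum_(j < K) Y j i * (x i * x j + y i * y j)
    = \sum_(a < K) \sum_(b < K) x a * Y a b * x b + \sum_(a < K) \sum_(b < K) y a * Y a b * y b.
  rewrite -big_split; apply: eq_bigr => a _ /=; rewrite -big_split; apply: eq_bigr => b _ /=.
  by rewrite Ysym; ring.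
exact: addr_ge0.
Qed.

End PsdTrace.

Lemma big_ord_addn_eq (V : nmodType) (k a : nat) (f : nat -> V) : (a <= k)%N ->
  \sum_(b < k.+1) (if (a + b == k)%N then f b else 0) = f (k - a)%N.
Proof.
move=> ak; rewrite -big_mkcond /=.
rewrite (eq_bigl (fun b : 'I_k.+1 => (b == (k - a)%N :> nat))) => [|b /=]; last first.
  by apply/eqP/eqP; lia.
by rewrite (big_ord1_eq _ f (k - a)%N k.+1) ltnS leq_subr.
Qed.

Section DensityBlocks.
Variable R : realType.
Local Notation C := R[i].

(* Extending v by zero outside the k-photon block gives a test vector
   supported in the box [0, k]^2. *)
Lemma density_block_psd (rho : op R) k : density rho ->
  forall v : 'I_k.+1 -> C,
  0 <= \sum_(a < k.+1) \sum_(b < k.+1) (v a)^*%C * rho (kvec k a) (kvec k b) * v b.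
Proof.
case=> _ psd _ v.
pose V (x : fock) : C := if (x.1 + x.2 == k)%N then v (inord x.1) else 0.
have := psd k.+1 V; congr (_ <= _); apply: eq_bigr => a _.
have row_sum (b : 'I_k.+1) : \sum_(c < k.+1) \sum_(d < k.+1)
    (V (nat_of_ord a, nat_of_ord b))^*%C * rho (nat_of_ord a, nat_of_ord b)
      (nat_of_ord c, nat_of_ord d) * V (nat_of_ord c, nat_of_ord d)
  = if (a + b == k)%N then
      \sum_(c < k.+1) (v a)^*%C * rho (nat_of_ord a, nat_of_ord b) (kvec k c) * v c
    else 0.
  rewrite /V /=; case: eqP => hab; last first.
    by apply: big1 => c _; apply: big1 => d _; rewrite conjc0 !mul0r.
  apply: eq_bigr => c _.
  under eq_bigr => d _ do rewrite (fun_if (fun z => _ * z)) mulr0.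
  rewrite (big_ord_addn_eq (fun d => (v (inord a))^*%C
             * rho (nat_of_ord a, nat_of_ord b) (nat_of_ord c, d) * v (inord c))).
    by rewrite !inord_val.
  exact: ltnSE (ltn_ord c).
under eq_bigr do rewrite row_sum.
by rewrite (big_ord_addn_eq (fun b => \sum_(c < k.+1)
       (v a)^*%C * rho (nat_of_ord a, b) (kvec k c) * v c)) // ltnSE.
Qed.

Lemma btr_PDC_ge (rho : op R) (pz c : R) k : density rho ->
  (forall w : 'I_k.+1 -> R, c * dot w w <= qform (pdc_block pz) w) ->
  c * complex.Re (btr rho (@idop R) k) <= complex.Re (btr rho (PDC pz) k).
Proof.
move=> hd hw; have [herm _ _] := hd.
have := @Re_trace_psd_ge0 R k.+1 (fun i j => rho (kvec k i) (kvec k j))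
   (fun a b => pdc_block pz a b - c * (a == b)%:R) (fun i j => herm _ _) (density_block_psd hd).
have -> : \sum_(i < k.+1) \sum_(j < k.+1) rho (kvec k i) (kvec k j) *
     (pdc_block pz j i - c * (j == i)%:R)%:C%C
   = btr rho (PDC pz) k - c%:C%C * btr rho (@idop R) k.
  rewrite /btr mulr_sumr -sumrB; apply: eq_bigr => i _.
  rewrite mulr_sumr -sumrB; apply: eq_bigr => j _.
  rewrite /PDC /idop kvec_eq -/(pdc_block pz j i).
  by case: (rho _ _) => u v; case: eqP => _; apply/eqP; rewrite eq_complex /=;
     apply/andP; split; apply/eqP; ring.
rewrite Re_subMl_real subr_ge0; apply=> [i j|x]; first by rewrite pdc_block_sym eq_sym.
have -> : \sum_(a < k.+1) \sum_(b < k.+1) x a * (pdc_block pz a b - c * (a == b)%:R) * x b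
    = qform (pdc_block pz) x - c * dot x x.
  rewrite /qform /dot mulr_sumr -sumrB; apply: eq_bigr => a _.
  rewrite (bigD1 a) //= [in RHS](bigD1 a) //= eqxx mulr1.
  rewrite (eq_bigr (fun b => x a * pdc_block pz a b * x b)) => [|b ba]; first ring.
  by rewrite eq_sym (negbTE ba) mulr0 subr0.
by rewrite subr_ge0.
Qed.

Lemma btr_PDC_ge0 (rho : op R) (pz : R) k : density rho -> 0 <= pz <= 1 ->
  0 <= complex.Re (btr rho (PDC pz) k).
Proof.
move=> hd hp; have := @btr_PDC_ge rho pz 0 k hd; rewrite mul0r; apply=> w.
by rewrite mul0r pdc_block_form_ge0.
Qed.

End DensityBlocks.

Lemma lambda_minE (R : realType) (pz : R) k : lambda_min pz k
  = 1 - (1 + Num.sqrt ((2 * pz - 1) ^+ 2 + 4 * pz * (1 - pz) * max_overlap_sqr R k)) / 2.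
Proof.
rewrite /lambda_min /max_overlap_sqr.
rewrite (_ : (if odd k then 8 else 16) * 2 ^- k * (pz - pz ^+ 2)
           = 4 * pz * (1 - pz) * ((if odd k then 2 else 4) / 2 ^+ k)); last first.
  by case: odd; ring.
by field.
Qed.

Lemma overlap_term_gt0 (R : realType) (pz : R) k : 0 < pz < 1 ->
  0 < 4 * pz * (1 - pz) * max_overlap_sqr R k.
Proof.
case/andP=> p0 p1.
by apply: mulr_gt0; rewrite ?max_overlap_sqr_gt0 // mulr_gt0 ?mulr_gt0 // subr_gt0.
Qed.

Lemma lambda_min_gt0 (R : realType) (pz : R) k : 0 < pz < 1 -> (2 < k)%N ->
  0 < lambda_min pz k.
Proof.
move=> hp k_gt2; rewrite lambda_minE.
have G1 := max_overlap_sqr_lt1 R k_gt2; have := overlap_term_gt0 k hp.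
have /andP [p0 p1] := hp.
set G := max_overlap_sqr R k; set D := _ + _ * G => G0.
have D0 : 0 <= D by rewrite addr_ge0 ?sqr_ge0 // ltW.
have D1 : D < 1.
  have : 0 < pz * (1 - pz) * (1 - G) by rewrite mulr_gt0 ?mulr_gt0 // subr_gt0.
  rewrite /D; nra.
have : Num.sqrt D < 1 by rewrite -sqrtr1 ltr_sqrt ?ltr01.
lra.
Qed.

Lemma lambda_min_btr_le (R : realType) (rho : op R) (pz : R) n k :
  density rho -> 0 < pz < 1 -> (2 < n)%N -> (n <= k)%N ->
  lambda_min pz n * complex.Re (btr rho (@idop R) k) <= complex.Re (btr rho (PDC pz) k).
Proof.
move=> hd hp n_gt2 nk; have /andP [p0 p1] := hp.
have Gk_le := max_overlap_sqr_nonincreasing R nk.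
have := overlap_term_gt0 n hp; rewrite lambda_minE.
set D := _ + _ * max_overlap_sqr R n => G0.
have PD : (2 * pz - 1) ^+ 2 < D by rewrite ltrDl.
have SD : Num.sqrt D ^+ 2 = D by rewrite sqr_sqrtr // (le_trans (sqr_ge0 _) (ltW PD)).
apply: btr_PDC_ge hd _ => w; apply: pdc_block_form_ge; rewrite ?SD ?sqrtr_ge0 //.
- exact: leq_trans nk.
- rewrite /D lerD2l ler_wpM2l // mulr_ge0 ?subr_ge0 ?mulr_ge0 //; lra.
Qed.

Lemma series_tail_le (R : realType) (a b : nat -> R) (l q : R) (N : nat) :
  (fun n => \sum_(k < n) a k) @ \oo --> (1 : R) ->
  (fun n => \sum_(k < n) b k) @ \oo --> q ->
  (forall k, 0 <= b k) -> (forall k, (N < k)%N -> l * a k <= b k) ->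
  l * (1 - \sum_(k < N.+1) a k) <= q.
Proof.
move=> a1 bq b0 ab; set T := \sum_(k < N.+1) a k.
have lim_l : (fun n => l * (\sum_(k < n) a k - T)) @ \oo --> l * (1 - T).
  by apply: cvgMr; apply: cvgB => //; exact: cvg_cst.
apply: (ler_cvg_to lim_l bq); exists N.+1 => // n /= Nn.
rewrite /T -!(big_mkord xpredT) (big_cat_nat (n := N.+1)) //= addrAC subrr add0r.
rewrite [X in _ <= X](big_cat_nat (n := N.+1)) //= mulr_sumr.
apply: (@le_trans _ _ (\sum_(N.+1 <= k < n) b k)).
  by apply: ler_sum_nat => k /andP [Nk _]; exact: ab.
by rewrite lerDr; apply: sumr_ge0 => k _.
Qed.

Theorem corollary1 (R : realType) (pz : R) (N : nat) (rho : op R) (q : R) :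
  0 < pz < 1 -> (1 < N)%N ->
  density rho ->
  (* tr[rho P_DC] = q *)
  (fun n => \sum_(k < n) complex.Re (btr rho (PDC pz) k)) @ \oo --> q ->
  1 - q / lambda_min pz N.+1 <= tr_PiN rho N.
Proof.
move=> hp N_gt1 hd hq; have [_ _ trace1] := hd.
have pz01 : 0 <= pz <= 1 by case/andP: hp => p0 p1; rewrite !ltW.
have N1_gt2 : (2 < N.+1)%N := N_gt1.
have lam0 := lambda_min_gt0 hp N1_gt2.
have := series_tail_le trace1 hq (fun k => btr_PDC_ge0 k hd pz01)
          (fun k Nk => lambda_min_btr_le hd hp N1_gt2 Nk).
rewrite /tr_PiN Re_sum (_ : 1 - q / _ = (lambda_min pz N.+1 - q) / lambda_min pz N.+1).
  by rewrite ler_pdivrMr //; lra.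
by field; rewrite gt_eqF.
Qed.
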